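(* Let $A = kQ/\ker\eta$ be a ghor algebra of a dimer quiver $Q$ on a surface $\Sigma$, and let $V$ be a simple left $A$-module. Then for each vertex $i \in Q_0$, $\dim_k e_iV \leq 1$.
   Context: $k$ is an algebraically closed field. $\Sigma$ is a compact orientable surface, smooth or with two points identified. A dimer quiver is a quiver $Q$ embedded in $\Sigma$ such that each connected component of $\Sigma\setminus Q$ is simply connected and bounded by an oriented cycle (a unit cycle). A perfect matching is a set $x$ of arrows such that each unit cycle contains exactly one arrow of $x$; $\mathcal{P}$ is the set of perfect matchings and $k[\mathcal{P}]$ the polynomial ring with variables $\mathcal{P}$. With $n = |Q_0|$ and $e_{ij}$ the matrix units of $M_n(k)$, $\eta: kQ \to M_n(k[\mathcal{P}])$ is the algebra homomorphism with $\eta(e_i) = e_{ii}$ for vertices $i$ and $\eta(a) = e_{\operatorname{h}(a),\operatorname{t}(a)}\prod_{x \in \mathcal{P},\, x \ni a} x$ for arrows $a$ (h = head, t = tail). The ghor algebra is $A = kQ/\ker\eta$; $e_i$ denotes the idempotent of vertex $i$. *)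

From HB Require Import structures.
From mathcomp Require Import all_boot all_order all_algebra.
From mathcomp Require Import mpoly.
Set Implicit Arguments.
Unset Strict Implicit.
Unset Printing Implicit Defensive.
Import Order.TTheory GRing.Theory.
Local Open Scope ring_scope.

Record quiver2 := Quiver2 {
  Q0 : finType;
  Q1 : finType;
  qhead : Q1 -> Q0;
  qtail : Q1 -> Q0;
  faces_pos : seq (seq Q1);
  faces_neg : seq (seq Q1)
}.

Section Dimer.
Variable Q : quiver2.

Definition unit_cycles : seq (seq (Q1 Q)) := faces_pos Q ++ faces_neg Q.

Definition is_oriented_cycle (f : seq (Q1 Q)) : bool :=
  (f != [::]) && uniq f && all (fun a => qtail (next f a) == qhead a) f.

(* ends of arrows: inl a = head end of a, inr b = tail end of b *)
Definition end_at (v : Q0 Q) (e : Q1 Q + Q1 Q) : bool :=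
  match e with inl a => qhead a == v | inr b => qtail b == v end.

Definition corner (e1 e2 : Q1 Q + Q1 Q) : bool :=
  match e1, e2 with
  | inl a, inr b => has (fun f => (a \in f) && (next f a == b)) unit_cycles
  | _, _ => false
  end.

Definition link_rel (v : Q0 Q) : rel (Q1 Q + Q1 Q) :=
  fun e1 e2 => [&& end_at v e1, end_at v e2 & corner e1 e2 || corner e2 e1].

Definition link_connected (v : Q0 Q) : bool :=
  [forall e1, forall e2,
     end_at v e1 ==> end_at v e2 ==> connect (link_rel v) e1 e2].

(* Combinatorial encoding of "Q is a dimer quiver on a compact orientable
   surface, smooth or with two points identified": the faces are oriented
   cycles, every arrow lies in exactly one positive and one negative unit
   cycle, every vertex lies on an arrow, the link of every vertex has at
   most two components, and at most one vertex (the pinch point) has a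
   disconnected link. *)
Definition is_dimer_quiver : Prop :=
  [/\ all is_oriented_cycle unit_cycles,
      (forall a : Q1 Q, count (fun f => a \in f) (faces_pos Q) = 1%N) /\
      (forall a : Q1 Q, count (fun f => a \in f) (faces_neg Q) = 1%N),
      (forall v : Q0 Q, exists e, end_at v e),
      (forall (v : Q0 Q) e1 e2 e3, end_at v e1 -> end_at v e2 -> end_at v e3 ->
        [|| connect (link_rel v) e1 e2, connect (link_rel v) e2 e3
          | connect (link_rel v) e1 e3])
    & forall v w : Q0 Q, ~~ link_connected v -> ~~ link_connected w -> v = w].

Definition perfect_matching (x : {set Q1 Q}) : bool :=
  all (fun f => count (mem x) f == 1%N) unit_cycles.

Definition PM : finType := {x : {set Q1 Q} | perfect_matching x}.

(* paths: (start vertex s, [:: a1; ...; am]) meaning a_m ... a_1, a1 first *)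
Fixpoint valid_path (s : Q0 Q) (l : seq (Q1 Q)) : bool :=
  match l with
  | [::] => true
  | a :: l' => (qtail a == s) && valid_path (qhead a) l'
  end.

Definition path_end (s : Q0 Q) (l : seq (Q1 Q)) : Q0 Q := last s (map (@qhead Q) l).

Variable k : fieldType.

Definition kP := {mpoly k[#|{: PM}|]}.

Definition eta_arrow (a : Q1 Q) : kP :=
  \prod_(x : PM | a \in val x) 'X_(enum_rank x).

(* eta on a path: e_{h, t} * product of the monomials of its arrows
   (eta(e_i) = e_ii for the trivial path at i) *)
Definition eta_path (p : Q0 Q * seq (Q1 Q)) : 'M[kP]_#|{: Q0 Q}| :=
  (\prod_(a <- p.2) eta_arrow a) *:
    delta_mx (enum_rank (path_end p.1 p.2)) (enum_rank p.1).

Definition eta_elt (c : seq (k * (Q0 Q * seq (Q1 Q)))) : 'M[kP]_#|{: Q0 Q}| :=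
  \sum_(q <- c) (q.1%:MP *: eta_path q.2).

(* Left kQ-modules: a k-vector space V with linear maps rv i (action of *)
(* e_i) and ra a (action of a) satisfying the defining relations of kQ. *)
Variable V : lmodType k.
Variable rv : Q0 Q -> {linear V -> V}.
Variable ra : Q1 Q -> {linear V -> V}.

Definition is_kQ_module : Prop :=
  [/\ forall i j v, rv i (rv j v) = if i == j then rv i v else 0,
      forall v, \sum_(i : Q0 Q) rv i v = v
    & forall a v, ra a v = rv (qhead a) (ra a (rv (qtail a) v))].

Definition act_path (p : Q0 Q * seq (Q1 Q)) (v : V) : V :=
  foldl (fun w a => ra a w) (rv p.1 v) p.2.

Definition act_elt (c : seq (k * (Q0 Q * seq (Q1 Q)))) (v : V) : V :=
  \sum_(q <- c) q.1 *: act_path q.2 v.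

(* ker eta annihilates V, i.e. V is a module over A = kQ / ker eta *)
Definition ker_eta_annihilates : Prop :=
  forall c : seq (k * (Q0 Q * seq (Q1 Q))),
    all (fun q => valid_path q.2.1 q.2.2) c ->
    eta_elt c = 0 -> forall v, act_elt c v = 0.

Definition is_simple_module : Prop :=
  (exists v : V, v != 0) /\
  forall W : {pred V},
    0 \in W ->
    (forall (c : k) u w, u \in W -> w \in W -> c *: u + w \in W) ->
    (forall p v, valid_path p.1 p.2 -> v \in W -> act_path p v \in W) ->
    (forall v, v \in W -> v = 0) \/ (forall v, v \in W).

Definition dim_eV_le1 (i : Q0 Q) : Prop :=
  exists u : V, forall v, exists c : k, rv i v = c *: u.

End Dimer.

(* Two paths with the same endpoints and the same multiset of arrows have the
   same image under eta, so they act identically on V; in particular the cycles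
   at i act on e_i V by commuting operators.  Fix w <> 0 in e_i V.  By
   simplicity every u in e_i V is c w for a combination c of cycles at i, and
   c w = 0 forces c = 0 on e_i V; so u * v := c v makes e_i V a field
   containing k w.  This field is a finitely generated k-algebra: every cycle
   longer than |Q_0| contains a loop b, and inserting b multiplies a nonzero
   cycle by a factor depending only on b, so the short cycles and these factors
   for short loops generate.  Zariski's lemma makes e_i V algebraic over the
   algebraically closed k, hence e_i V = k w. *)

From HB Require Import structures.
From mathcomp Require Import all_boot all_order all_algebra.
From mathcomp Require Import mpoly boolp.
From mathcomp Require Import ring zify.
Set Implicit Arguments. Unset Strict Implicit. Unset Printing Implicit Defensive.
Import GRing.Theory.
Local Open Scope ring_scope.

(** * Zariski's lemma *)

Section Subrings.
Variable L : fieldType.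

Record subring := Subring {
  subring_pred :> {pred L};
  subring_predP : GRing.subring_closed subring_pred }.

Record subfield := Subfield {
  subfield_pred :> {pred L};
  subfield_predP : GRing.divring_closed subfield_pred }.

HB.instance Definition _ (R : subring) :=
  GRing.isSubringClosed.Build L (subring_pred R) (subring_predP R).
HB.instance Definition _ (K : subfield) :=
  GRing.isDivringClosed.Build L (subfield_pred K) (subfield_predP K).

Definition subring_type (R : subring) := {x : L | x \in R}.
Definition subfield_type (K : subfield) := {x : L | x \in K}.

Section Types.
Variables (R : subring) (K : subfield).
HB.instance Definition _ := [isSub of subring_type R for @sval L (fun x => x \in R)].
HB.instance Definition _ := [Choice of subring_type R by <:].
HB.instance Definition _ := [SubChoice_isSubComNzRing of subring_type R by <:].
HB.instance Definition _ := [isSub of subfield_type K for @sval L (fun x => x \in K)].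
HB.instance Definition _ := [Choice of subfield_type K by <:].
HB.instance Definition _ := [SubChoice_isSubIntegralDomain of subfield_type K by <:].
HB.instance Definition _ := [SubIntegralDomain_isSubField of subfield_type K by <:].
End Types.

Definition sr_integral (R : subring) (x : L) :=
  integralOver (val : subring_type R -> L) x.
Definition sf_integral (K : subfield) (x : L) :=
  integralOver (val : subfield_type K -> L) x.

Definition transcendental (K : subfield) (y : L) : Prop :=
  forall p : {poly L}, p \is a polyOver K -> root p y -> p = 0.

Definition infinite_pred (S : {pred L}) : Prop :=
  forall s : seq L, exists2 c, c \in S & c \notin s.

Inductive ring_gen (S : {pred L}) (ys : seq L) : L -> Prop :=
| GenBase x : x \in S -> ring_gen S ys x
| GenElt y : y \in ys -> ring_gen S ys y
| GenAdd x z : ring_gen S ys x -> ring_gen S ys z -> ring_gen S ys (x + z)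
| GenMul x z : ring_gen S ys x -> ring_gen S ys z -> ring_gen S ys (x * z).

End Subrings.

Section Integrality.
Variable L : fieldType.
Implicit Types (R : subring L) (K : subfield L) (x y z c : L) (p : {poly L}).

Lemma integral_trans (R1 R2 : comNzRingType) (f1 : {rmorphism R1 -> L})
    (f2 : {rmorphism R2 -> L}) x :
  (forall r, integralOver f1 (f2 r)) -> integralOver f2 x -> integralOver f1 x.
Proof.
move=> f2_int [P Pmon Px].
apply: (@integral_root_monic _ _ f1 x _ (monic_map f2 Pmon) Px).
by move=> _ /(nthP 0) [l _ <-]; rewrite coef_map; apply: f2_int.
Qed.

Lemma integral_ring_gen (R0 : comNzRingType) (f : {rmorphism R0 -> L}) S ys x :
  {in S, forall x, integralOver f x} -> {in ys, forall y, integralOver f y} ->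
  ring_gen S ys x -> integralOver f x.
Proof.
move=> S_int ys_int.
elim=> {x} [x /S_int|y /ys_int|x z _ ? _ ?|x z _ ? _ ?] //.
- exact: integral_add.
- exact: integral_mul.
Qed.

Lemma sr_integral_mem R x : x \in R -> sr_integral R x.
Proof. by move=> Rx; have -> : x = val (Sub x Rx : subring_type R); last apply: integral_id. Qed.

Lemma sf_integral_mem K x : x \in K -> sf_integral K x.
Proof. by move=> Kx; have -> : x = val (Sub x Kx : subfield_type K); last apply: integral_id. Qed.

Lemma sr_integral_subset R1 R2 x :
  {subset R1 <= R2} -> sr_integral R1 x -> sr_integral R2 x.
Proof. by move=> sR12; apply: integral_trans => r; apply/sr_integral_mem/sR12/valP. Qed.

Lemma sr_integral_polyOver R p x :
  p \is monic -> p \is a polyOver R -> root p x -> sr_integral R x.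
Proof.
move=> pmon pR px; apply: integral_root_monic pmon px _ => _ /(nthP 0) [l _ <-].
exact/sr_integral_mem/polyOverP.
Qed.

Lemma sf_integralRange_polyOver K p :
  p \is a polyOver K -> {in p : seq L, integralRange (val : subfield_type K -> L)}.
Proof. by move=> pK _ /(nthP 0) [l _ <-]; apply/sf_integral_mem/polyOverP. Qed.

Lemma not_integral_transcendental K y : ~ sf_integral K y -> transcendental K y.
Proof.
move=> y_nint p pK py; apply/eqP/negPn/negP => p0; apply: y_nint.
exact: integral_root p0 py (sf_integralRange_polyOver pK).
Qed.

Lemma infinite_pred_subset (S1 S2 : {pred L}) :
  {subset S1 <= S2} -> infinite_pred S1 -> infinite_pred S2.
Proof. by move=> sS12 S1inf s; have [c /sS12 cS2 cs] := S1inf s; exists c. Qed.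

Lemma infinite_uniq (S : {pred L}) n : infinite_pred S ->
  exists s : seq L, [/\ size s = n, uniq s & all (mem S) s].
Proof.
move=> Sinf; elim: n => [|n [s [s_size s_uniq sS]]]; first by exists [::].
have [c cS cs] := Sinf s; exists (c :: s).
by rewrite /= s_size cs s_uniq cS sS.
Qed.

Lemma infinite_nonroot (S : {pred L}) p :
  infinite_pred S -> p != 0 -> exists2 c, c \in S & ~~ root p c.
Proof.
move=> Sinf p0; have [s [s_size s_uniq sS]] := infinite_uniq (size p) Sinf.
have [s_roots|/allPn [c cs nroot]] := boolP (all (root p) s).
  by have := max_poly_roots p0 s_roots s_uniq; rewrite s_size ltnn.
by exists c => //; apply: (allP sS).
Qed.

Lemma horner_reciprocal p d t : (size p <= d.+1)%N -> t != 0 ->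
  \sum_(l < d.+1) p`_l * t ^+ (d - l) = t ^+ d * p.[t^-1].
Proof.
move=> p_size t0; rewrite (horner_coef_wide _ p_size) mulr_sumr.
apply: eq_bigr => l _; rewrite mulrCA; congr (_ * _).
have -> : t ^+ d = t ^+ (d - l) * t ^+ l by rewrite -exprD subnK // -ltnS.
by rewrite exprVn mulfK ?expf_neq0.
Qed.

End Integrality.

Section Adjoin.
Variables (L : fieldType) (K : subfield L) (y : L).

Definition adjoin_pred : {pred L} := fun x => `[< exists p q : {poly L},
  [/\ p \is a polyOver K, q \is a polyOver K, q.[y] != 0 & x = p.[y] / q.[y]] >].

Lemma adjoin_closed : GRing.divring_closed adjoin_pred.
Proof.
split.
- by apply/asboolP; exists 1, 1; rewrite !rpred1 hornerC oner_neq0 divr1.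
- move=> _ _ /asboolP [p [q [pK qK qy ->]]] /asboolP [p' [q' [pK' qK' qy' ->]]].
  apply/asboolP; exists (p * q' - p' * q), (q * q').
  split; rewrite ?rpredB ?rpredM // hornerM ?mulf_neq0 //.
  by rewrite hornerD hornerN !hornerM; field; apply/andP.
- move=> _ _ /asboolP [p [q [pK qK qy ->]]] /asboolP [p' [q' [pK' qK' qy' ->]]].
  have [p'y0|p'y] := eqVneq p'.[y] 0.
    apply/asboolP; exists 0, 1; rewrite rpred0 rpred1 hornerC oner_neq0 horner0.
    by rewrite p'y0 mul0r invr0 !mulr0 mul0r.
  apply/asboolP; exists (p * q'), (q * p').
  split; rewrite ?rpredM // hornerM ?mulf_neq0 //.
  by rewrite hornerM; field; rewrite qy qy' p'y.
Qed.

Definition adjoin : subfield L := Subfield adjoin_closed.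

Lemma adjoin_subset : {subset K <= adjoin}.
Proof.
move=> x Kx; apply/asboolP; exists x%:P, 1.
by rewrite polyOverC Kx rpred1 !hornerC oner_neq0 divr1.
Qed.

Lemma adjoin_elt : y \in adjoin.
Proof.
apply/asboolP; exists 'X, 1.
by rewrite polyOverX rpred1 hornerX hornerC oner_neq0 divr1.
Qed.

Lemma ring_gen_adjoin ys x : ring_gen K (y :: ys) x -> ring_gen adjoin ys x.
Proof.
elim=> {x} [x Kx|z|x z _ ? _ ?|x z _ ? _ ?].
- exact/GenBase/adjoin_subset.
- by rewrite inE => /predU1P [->|]; [apply/GenBase/adjoin_elt | apply: GenElt].
- exact: GenAdd.
- exact: GenMul.
Qed.

End Adjoin.

Section Localize.
Variables (L : fieldType) (K : subfield L) (y : L).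
Implicit Types (f g h : {poly L}) (x : L).

(* K[y, f(y)^-1] *)
Definition localize_pred f : {pred L} := fun x => `[< exists m (p : {poly L}),
  p \is a polyOver K /\ x * f.[y] ^+ m = p.[y] >].

Lemma localize_closed f : f \is a polyOver K -> GRing.subring_closed (localize_pred f).
Proof.
move=> fK; split.
- by apply/asboolP; exists 0%N, 1; rewrite rpred1 expr0 mulr1 hornerC.
- move=> x z /asboolP [m [p [pK xp]]] /asboolP [m' [p' [pK' zp']]].
  apply/asboolP; exists (m + m')%N, (p * f ^+ m' - p' * f ^+ m).
  rewrite rpredB ?rpredM ?rpredX // hornerD hornerN !hornerM !horner_exp -xp -zp'.
  by rewrite exprD; split => //; ring.
- move=> x z /asboolP [m [p [pK xp]]] /asboolP [m' [p' [pK' zp']]].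
  apply/asboolP; exists (m + m')%N, (p * p').
  by rewrite rpredM // hornerM -xp -zp' exprD; split => //; ring.
Qed.

Definition localize f (fK : f \is a polyOver K) : subring L :=
  Subring (localize_closed fK).

Lemma localize_subset f : {subset K <= localize_pred f}.
Proof.
by move=> x Kx; apply/asboolP; exists 0%N, x%:P; rewrite polyOverC Kx expr0 mulr1 hornerC.
Qed.

Lemma localize_elt f : y \in localize_pred f.
Proof. by apply/asboolP; exists 0%N, 'X; rewrite polyOverX expr0 mulr1 hornerX. Qed.

Lemma localize_dvd f g h : g \is a polyOver K -> h = f * g ->
  {subset localize_pred f <= localize_pred h}.
Proof.
move=> gK -> x /asboolP [m [p [pK xp]]]; apply/asboolP; exists m, (p * g ^+ m).
by rewrite rpredM ?rpredX // !hornerM horner_exp -xp exprMn mulrA.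
Qed.

Lemma localize_common_denominator f (s : seq L) :
  f \is a polyOver K -> all (mem (localize_pred f)) s ->
  exists N (H : nat -> {poly L}),
    forall l, H l \is a polyOver K /\ s`_l * f.[y] ^+ N = (H l).[y].
Proof.
move=> fK; elim: s => [_|x s IH /= /andP [/asboolP [m [p [pK xp]]] /IH [N [H sH]]]].
  by exists 0%N, (fun=> 0) => l; rewrite rpred0 nth_nil mul0r horner0.
exists (m + N)%N, (fun l => if l is l'.+1 then H l' * f ^+ m else p * f ^+ N).
case=> [|l] /=; first by rewrite rpredM ?rpredX // hornerM horner_exp -xp exprD mulrA.
have [HK Hy] := sH l; rewrite rpredM ?rpredX // hornerM horner_exp -Hy exprD.
by split => //; ring.
Qed.

End Localize.

Section Transcendental.
Variables (L : fieldType) (K : subfield L) (y : L).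
Hypothesis y_tr : transcendental K y.

Lemma transcendental_neq c : c \in K -> y != c.
Proof.
move=> Kc; apply/eqP => yc.
have := @y_tr ('X - c%:P); rewrite polyOverXsubC root_XsubC yc eqxx.
by move=> /(_ Kc isT)/eqP; rewrite polyXsubC_eq0.
Qed.

(* Clearing the denominators of an integral equation of (y - c)^-1 yields a
   polynomial G over K with G(y) = 0, hence G = 0, whereas G(c) = f(c)^N. *)
Lemma inv_XsubC_not_integral f (fK : f \is a polyOver K) c :
  c \in K -> f.[c] != 0 -> ~ sr_integral (localize y fK) (y - c)^-1.
Proof.
move=> Kc fc [P Pmon]; set Q := map_poly val P => Qroot.
have Qmon : Q \is monic := monic_map _ Pmon.
have QR : all (mem (localize_pred K y f)) Q.
  by apply/allP => _ /(nthP 0) [l _ <-]; rewrite coef_map; apply: valP.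
have [N [H HQ]] := localize_common_denominator fK QR.
set d := (size Q).-1.
have Qsize : size Q = d.+1 by rewrite prednK // size_poly_gt0 monic_neq0.
have yc0 : y - c != 0 by rewrite subr_eq0 transcendental_neq.
pose G := \sum_(l < d.+1) H l * ('X - c%:P) ^+ (d - l).
have GK : G \is a polyOver K.
  by apply: rpred_sum => l _; rewrite rpredM ?rpredX ?polyOverXsubC //; case: (HQ l).
have G0 : G = 0.
  apply: y_tr GK _; apply/rootP; rewrite horner_sum.
  transitivity (f.[y] ^+ N * \sum_(l < d.+1) Q`_l * (y - c) ^+ (d - l)).
    rewrite mulr_sumr; apply: eq_bigr => l _.
    by rewrite hornerM horner_exp hornerXsubC -(HQ l).2 mulrCA mulrA.
  by rewrite horner_reciprocal ?Qsize // (rootP Qroot) !mulr0.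
have Hd : H d = f ^+ N.
  apply/eqP; rewrite -subr_eq0; apply/eqP/y_tr; first by rewrite rpredB ?rpredX ?(HQ d).1.
  apply/rootP; rewrite hornerD hornerN horner_exp -(HQ d).2.
  by have := monicP Qmon; rewrite lead_coefE => ->; rewrite mul1r subrr.
have : G.[c] = f.[c] ^+ N.
  rewrite /G big_ord_recr /= hornerD horner_sum big1 ?add0r.
    by rewrite subnn expr0 mulr1 Hd horner_exp.
  move=> l _; rewrite hornerM horner_exp hornerXsubC subrr expr0n /=.
  by rewrite subn_eq0 leqNgt ltn_ord mulr0.
by rewrite G0 horner0 => /esym/eqP; rewrite expf_eq0 (negbTE fc) andbF.
Qed.

End Transcendental.

Section Zariski.
Variable L : fieldType.
Implicit Types (K : subfield L) (x y z : L).

Lemma adjoin_localize K y (s : seq L) : all (mem (adjoin K y)) s ->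
  exists f (fK : f \is a polyOver K), f.[y] != 0 /\ {subset s <= localize_pred K y f}.
Proof.
elim: s => [_|x s IH /= /andP [/asboolP [p [q [pK qK qy ->]]] /IH [g [gK [gy sg]]]]].
  by exists 1, (rpred1 _); rewrite hornerC oner_neq0.
have qgK : q * g \is a polyOver K by rewrite rpredM.
exists (q * g), qgK; rewrite hornerM mulf_neq0 //; split=> // u /predU1P [->|/sg].
  apply: (localize_dvd gK (erefl (q * g))); apply/asboolP; exists 1%N, p.
  by rewrite expr1 divfK.
exact: (localize_dvd qK (mulrC q g)).
Qed.

Lemma integral_adjoin_localize K y (zs : seq L) :
  {in zs, forall z, sf_integral (adjoin K y) z} ->
  exists f (fK : f \is a polyOver K),
    f.[y] != 0 /\ {in zs, forall z, sr_integral (localize y fK) z}.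
Proof.
elim: zs => [_|z zs IH zs_int].
  by exists 1, (rpred1 _); rewrite hornerC oner_neq0.
have [g [gK [gy zs_loc]]] := IH (fun u u_in => zs_int u (mem_behead (s := z :: zs) u_in)).
have [P Pmon Pz] := zs_int z (mem_head z zs).
have Pcoef : all (mem (adjoin K y)) (map_poly val P).
  by apply/allP => _ /(nthP 0) [l _ <-]; rewrite coef_map; apply: valP.
have [h [hK [hy Ph]]] := adjoin_localize Pcoef.
have ghK : g * h \is a polyOver K by rewrite rpredM.
have sgh : {subset localize y gK <= localize y ghK} by exact: (localize_dvd hK).
have shg : {subset localize y hK <= localize y ghK}.
  exact: (localize_dvd gK (mulrC g h)).
exists (g * h), ghK; rewrite hornerM mulf_neq0 //; split=> // u /predU1P [->|/zs_loc].
  apply: sr_integral_subset shg _.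
  have Ploc : map_poly val P \is a polyOver (localize y hK) by apply/allP.
  exact: sr_integral_polyOver (monic_map _ Pmon) Ploc Pz.
exact: sr_integral_subset sgh.
Qed.

Lemma integral_adjoin_algebraic K y x :
  sf_integral K y -> sf_integral (adjoin K y) x -> sf_integral K x.
Proof.
move=> Ky; apply: integral_trans => -[u]; rewrite /= => /asboolP [p [q [pK qK _ ->]]].
apply: (@integral_div (subfield_type K) L val);
  by apply: integral_horner => //; apply: sf_integralRange_polyOver.
Qed.

(* The generators are integral over some K[y, f(y)^-1]; as K is infinite we
   can pick c in K with f(c) <> 0, and then (y - c)^-1 would be integral too. *)
Lemma zariski_transcendental K y ys :
  infinite_pred K -> ~ sf_integral K y -> (forall x, ring_gen K (y :: ys) x) ->
  ~ {in ys, forall z, sf_integral (adjoin K y) z}.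
Proof.
move=> Kinf /not_integral_transcendental y_tr Kgen.
move=> /integral_adjoin_localize [f [fK [fy ys_loc]]].
have f0 : f != 0 by apply: contra_neq fy => ->; rewrite horner0.
have [c Kc fc] := infinite_nonroot Kinf f0.
apply: (inv_XsubC_not_integral (fK := fK) y_tr Kc fc).
apply: integral_ring_gen (Kgen _) => [x Kx | z].
  exact/sr_integral_mem/localize_subset.
by rewrite inE => /predU1P [->|/ys_loc //]; apply/sr_integral_mem/localize_elt.
Qed.

Theorem zariski ys K : infinite_pred K -> (forall x, ring_gen K ys x) ->
  forall x, sf_integral K x.
Proof.
elim: ys K => [|y ys IH] K Kinf Kgen.
  move=> x; apply: sf_integral_mem.
  by elim: (Kgen x) => {x} // [x z _ ? _ ?|x z _ ? _ ?]; rewrite ?rpredD ?rpredM.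
have adj_int := IH (adjoin K y) (infinite_pred_subset (@adjoin_subset _ K y) Kinf)
  (fun x => ring_gen_adjoin (Kgen x)).
have [Ky|Kny] := pselect (sf_integral K y).
  by move=> x; apply: integral_adjoin_algebraic Ky (adj_int x).
by case: (zariski_transcendental Kinf Kny Kgen (fun z _ => adj_int z)).
Qed.

End Zariski.

Lemma closed_field_infinite (k : closedFieldType) : infinite_pred (@predT k).
Proof.
move=> s; pose q := (\prod_(b <- s) ('X - b%:P)) * 'X.
have q_size : (1 < size q)%N.
  by rewrite size_mulX ?monic_neq0 ?monic_prod_XsubC // size_prod_XsubC.
have [a qa] : exists a, root (q + 1) a.
  by apply/closed_rootP; rewrite size_polyDl ?size_poly1 // neq_ltn q_size orbT.
exists a => //; apply/negP => sa; move: qa; rewrite /root hornerD hornerC hornerM.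
by rewrite horner_prod (big_rem a) //= hornerXsubC subrr !mul0r add0r oner_eq0.
Qed.

Section FieldImage.
Variables (k : fieldType) (L : fieldType) (iota : {rmorphism k -> L}).

Definition image_pred : {pred L} := fun x => `[< exists a, x = iota a >].

Lemma image_closed : GRing.divring_closed image_pred.
Proof.
split=> [|_ _ /asboolP [a ->] /asboolP [b ->]|_ _ /asboolP [a ->] /asboolP [b ->]].
- by apply/asboolP; exists 1; rewrite rmorph1.
- by apply/asboolP; exists (a - b); rewrite rmorphB.
- by apply/asboolP; exists (a / b); rewrite fmorph_div.
Qed.

Definition image_subfield : subfield L := Subfield image_closed.

Lemma image_poly_lift p : p \is a polyOver image_subfield ->
  exists p0 : {poly k}, p = map_poly iota p0.
Proof.
elim/poly_ind: p => [_|p c IH /polyOverP pc]; first by exists 0; rewrite map_poly0.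
have /asboolP [a ->] : c \in image_pred.
  by have := pc 0%N; rewrite coefD coefMX coefC /= add0r.
have [p0 ->] : exists p0, p = map_poly iota p0.
  by apply/IH/polyOverP => l; have := pc l.+1; rewrite coefD coefMX coefC /= addr0.
by exists (p0 * 'X + a%:P); rewrite rmorphD rmorphM /= map_polyX map_polyC.
Qed.

End FieldImage.

Lemma image_infinite (k : closedFieldType) (L : fieldType) (iota : {rmorphism k -> L}) :
  infinite_pred (image_subfield iota).
Proof.
move=> s.
have [t [t_size t_uniq _]] := infinite_uniq (size s).+1 (@closed_field_infinite k).
have [/allP t_in_s|/allPn [_ /mapP [a _ ->] s_a]] := boolP (all (mem s) (map iota t)).
  have iota_t_uniq : uniq (map iota t) by rewrite map_inj_uniq //; apply: fmorph_inj.
  by have := uniq_leq_size iota_t_uniq t_in_s; rewrite size_map t_size ltnn.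
by exists (iota a) => //; apply/asboolP; exists a.
Qed.

Theorem zariski_closed (k : closedFieldType) (L : fieldType) (iota : {rmorphism k -> L})
    (ys : seq L) :
  (forall x, ring_gen (image_subfield iota) ys x) -> forall x, exists a, x = iota a.
Proof.
move=> Lgen x; have [P Pmon] := zariski (image_infinite iota) Lgen x.
have [|P0 P0E] := @image_poly_lift _ _ iota (map_poly val P).
  by apply/polyOverP => l; rewrite coef_map; apply: valP.
have P0_neq0 : P0 != 0.
  apply: contraTneq (monic_map val Pmon) => P00.
  by rewrite P0E P00 map_poly0 monicE lead_coef0 eq_sym oner_eq0.
rewrite P0E; have [r ->] := closed_field_poly_normal P0.
rewrite map_polyZ rmorph_prod /= /root hornerZ mulf_eq0 fmorph_eq0 lead_coef_eq0.
rewrite (negbTE P0_neq0) horner_prod prodf_seq_eq0 => /hasP [b _].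
by rewrite /= map_polyXsubC hornerXsubC subr_eq0 => /eqP ->; exists b.
Qed.

(** * Cycles acting on a simple module *)

Fixpoint words (T : finType) (m : nat) : seq (seq T) :=
  if m is m'.+1 then [::] :: allpairs cons (enum T) (words T m') else [:: [::]].

Lemma words_mem (T : finType) m (l : seq T) : (size l <= m)%N -> l \in words T m.
Proof.
elim: m l => [|m IH] [|a l] //= l_size.
by rewrite inE /=; apply/allpairsP; exists (a, l); rewrite mem_enum IH.
Qed.

Lemma pigeonhole_take (X : Type) (T : finType) (F : seq X -> T) (c : seq X) :
  (#|T| < size c)%N -> exists a b g, [/\ c = a ++ b ++ g, (0 < size b)%N,
    (size b <= #|T|)%N & F (a ++ b) = F a].
Proof.
move=> c_size; pose G (j : 'I_#|T|.+1) := F (take j c).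
have /injectivePn [j1 [j2 j12 Gj12]] : ~~ injectiveb G.
  by apply/injectiveP => /leq_card; rewrite card_ord ltnn.
wlog lt_j12 : j1 j2 j12 Gj12 / (j1 < j2)%N.
  move=> wlog_j; have [lt12|lt21|/val_inj eq12] := ltngtP j1 j2.
  - exact: (wlog_j j1 j2).
  - by apply: (wlog_j j2 j1); rewrite // eq_sym.
  - by rewrite eq12 eqxx in j12.
have le_j12 : (j1 <= j2)%N := ltnW lt_j12.
have le_j2 : (j2 <= #|T|)%N := ltnSE (ltn_ord j2).
have le_j2c : (j2 <= size c)%N := leq_trans le_j2 (ltnW c_size).
have b_size : size (take (j2 - j1) (drop j1 c)) = (j2 - j1)%N.
  by rewrite size_takel // size_drop leq_sub2r.
exists (take j1 c), (take (j2 - j1) (drop j1 c)), (drop j2 c); split.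
- rewrite -{1}(cat_take_drop j1 c) -{1}(cat_take_drop (j2 - j1) (drop j1 c)).
  by rewrite drop_drop subnK.
- by rewrite b_size subn_gt0.
- by rewrite b_size (leq_trans (leq_subr _ _)).
- by rewrite -takeD subnKC //; apply: esym.
Qed.

Section Paths.
Variable Q : quiver2.
Implicit Types (i s : Q0 Q) (l : seq (Q1 Q)).

Lemma path_end_cat s l1 l2 : path_end s (l1 ++ l2) = path_end (path_end s l1) l2.
Proof. by rewrite /path_end map_cat last_cat. Qed.

Lemma valid_path_cat s l1 l2 :
  valid_path s (l1 ++ l2) = valid_path s l1 && valid_path (path_end s l1) l2.
Proof. by elim: l1 s => //= a l1 IH s; rewrite IH andbA. Qed.

Definition cycle_at i l := valid_path i l && (path_end i l == i).

Lemma cycle_at_nil i : cycle_at i [::].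
Proof. by rewrite /cycle_at /= eqxx. Qed.

Lemma cycle_at_cat i l1 l2 : cycle_at i l1 -> cycle_at i l2 -> cycle_at i (l1 ++ l2).
Proof.
move=> /andP [v1 /eqP e1] /andP [v2 /eqP e2].
by rewrite /cycle_at valid_path_cat path_end_cat e1 v1 v2 e2 eqxx.
Qed.

Lemma cycle_at_excise i a b g : cycle_at i (a ++ b ++ g) ->
  path_end i (a ++ b) = path_end i a ->
  cycle_at i (a ++ g) /\ cycle_at i (a ++ b ++ b ++ g).
Proof.
rewrite /cycle_at !valid_path_cat !path_end_cat => /andP [/and3P [va vb vg] /eqP e] eb.
by rewrite eb in vg e; rewrite !eb va vb vg e eqxx.
Qed.

End Paths.

Section Module.
Variables (Q : quiver2) (k : fieldType) (V : lmodType k).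
Variables (rv : Q0 Q -> {linear V -> V}) (ra : Q1 Q -> {linear V -> V}).
Hypothesis Vmod : is_kQ_module rv ra.
Implicit Types (i s : Q0 Q) (a : Q1 Q) (l : seq (Q1 Q)) (p : Q0 Q * seq (Q1 Q)) (x : V).

Lemma rv_idem i x : rv i (rv i x) = rv i x.
Proof. by case: Vmod => rvM _ _; rewrite rvM eqxx. Qed.

Lemma rv_orth i j x : i != j -> rv i (rv j x) = 0.
Proof. by case: Vmod => rvM _ _ ij; rewrite rvM (negbTE ij). Qed.

Lemma rv_ra_head a x : rv (qhead a) (ra a x) = ra a x.
Proof. by case: Vmod => _ _ raE; rewrite [in LHS]raE rv_idem -raE. Qed.

Lemma ra_rv_tail a x : ra a (rv (qtail a) x) = ra a x.
Proof. by case: Vmod => _ _ raE; rewrite [LHS]raE [RHS]raE rv_idem. Qed.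

Definition arrows_act l x := foldl (fun w a => ra a w) x l.

Lemma arrows_act_is_linear l : linear (arrows_act l).
Proof. by elim: l => //= a l IH c x y; rewrite /arrows_act /= linearP; apply: IH. Qed.

HB.instance Definition _ l :=
  GRing.isLinear.Build k V V *:%R (arrows_act l) (arrows_act_is_linear l).

Lemma act_pathE p x : act_path rv ra p x = arrows_act p.2 (rv p.1 x).
Proof. by []. Qed.

Lemma act_path_is_linear p : linear (act_path rv ra p).
Proof. by move=> c x y; rewrite !act_pathE !linearP. Qed.

HB.instance Definition _ p :=
  GRing.isLinear.Build k V V *:%R (act_path rv ra p) (act_path_is_linear p).

Lemma arrows_act_cons a l x : arrows_act (a :: l) x = arrows_act l (ra a x).
Proof. by []. Qed.

Lemma arrows_act_end s l x : rv s x = x ->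
  rv (path_end s l) (arrows_act l x) = arrows_act l x.
Proof. by elim: l s x => // a l IH s x _; rewrite arrows_act_cons IH // rv_ra_head. Qed.

Lemma arrows_act_invalid s l x : rv s x = x -> ~~ valid_path s l -> arrows_act l x = 0.
Proof.
elim: l s x => // a l IH s x sx; rewrite arrows_act_cons /=.
case: eqP => [_|ts] /= vl; first by rewrite (IH (qhead a)) // rv_ra_head.
rewrite -ra_rv_tail -sx rv_orth; last exact/eqP.
by rewrite !linear0.
Qed.

Lemma act_path_end s l x :
  rv (path_end s l) (act_path rv ra (s, l) x) = act_path rv ra (s, l) x.
Proof. by rewrite act_pathE arrows_act_end // rv_idem. Qed.

Lemma act_path_invalid s l x : ~~ valid_path s l -> act_path rv ra (s, l) x = 0.
Proof. by move=> nvalid; rewrite act_pathE (arrows_act_invalid _ nvalid) // rv_idem. Qed.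

Lemma act_path_comp p q x : act_path rv ra q (act_path rv ra p x) =
  if path_end p.1 p.2 == q.1 then act_path rv ra (p.1, p.2 ++ q.2) x else 0.
Proof.
case: p q => s l [s' l'] /=; case: eqP => [<-|ne].
  by rewrite [LHS]act_pathE act_path_end !act_pathE /arrows_act foldl_cat.
by rewrite act_pathE -act_path_end rv_orth ?linear0 //; apply/eqP => e; apply: ne.
Qed.

Hypothesis Vker : ker_eta_annihilates rv ra.

Lemma act_path_perm s l1 l2 x : valid_path s l1 -> valid_path s l2 -> perm_eq l1 l2 ->
  path_end s l1 = path_end s l2 -> act_path rv ra (s, l1) x = act_path rv ra (s, l2) x.
Proof.
move=> v1 v2 l12 e12; apply/eqP; rewrite -subr_eq0; apply/eqP.
have := @Vker [:: (1, (s, l1)); (-1, (s, l2))]; rewrite /= v1 v2 => /(_ isT).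
rewrite /eta_elt /act_elt !big_cons big_nil /eta_path /= e12 (perm_big _ l12) /=.
rewrite !addr0 -scalerDl -mpolyCD addrN mpolyC0 scale0r => /(_ erefl x).
by rewrite !big_cons big_nil addr0 scale1r scaleN1r.
Qed.

Hypothesis Vsimple : is_simple_module rv ra.

Lemma simple_submodule_full (W : {pred V}) x0 :
  0 \in W -> (forall (c : k) u w, u \in W -> w \in W -> c *: u + w \in W) ->
  (forall p x, x \in W -> act_path rv ra p x \in W) ->
  x0 \in W -> x0 != 0 -> forall x, x \in W.
Proof.
move=> W0 Wlin Wact Wx0 x00.
case: Vsimple => _ /(_ W W0 Wlin (fun p x _ => Wact p x)) [W_0|//].
by rewrite (W_0 _ Wx0) eqxx in x00.
Qed.

Lemma simple_cyclic v0 : v0 != 0 -> forall x, exists c, x = act_elt rv ra c v0.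
Proof.
move=> v00 x; pose W : {pred V} := fun x => `[< exists c, x = act_elt rv ra c v0 >].
apply/(asboolP (exists c, x = _))/(simple_submodule_full (W := W) _ _ _ _ v00).
- by apply/asboolP; exists [::]; rewrite /act_elt big_nil.
- move=> c _ _ /asboolP [c1 ->] /asboolP [c2 ->]; apply/asboolP.
  exists ([seq (c * q.1, q.2) | q <- c1] ++ c2).
  rewrite /act_elt big_cat big_map scaler_sumr /=; congr (_ + _).
  by apply: eq_bigr => q _; rewrite scalerA.
- move=> [s l] _ /asboolP [c ->]; apply/asboolP.
  exists [seq (if path_end q.2.1 q.2.2 == s then q.1 else 0, (q.2.1, q.2.2 ++ l)) | q <- c].
  rewrite /act_elt linear_sum big_map; apply: eq_bigr => [[a [s' l']]] _ /=.
  by rewrite linearZ /= act_path_comp /=; case: eqP; rewrite ?scale0r ?scaler0.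
- apply/asboolP; exists [seq (1, (s, [::])) | s <- enum (Q0 Q)].
  rewrite /act_elt big_map big_enum /=; case: Vmod => _ rv_sum _.
  by rewrite -[LHS]rv_sum; apply: eq_bigr => s _; rewrite scale1r.
Qed.

Section CycleAlgebra.
Variable i : Q0 Q.
Local Notation cact l := (act_path rv ra (i, l)).
Implicit Types (c : seq (k * seq (Q1 Q))).

Definition comb_at c := all (fun q => cycle_at i q.2) c.

Definition comb_act c x := \sum_(q <- c) q.1 *: cact q.2 x.

Lemma comb_act_is_linear c : linear (comb_act c).
Proof.
move=> a x y; rewrite /comb_act scaler_sumr -big_split /=; apply: eq_bigr => q _.
by rewrite linearP scalerDr !scalerA mulrC.
Qed.

HB.instance Definition _ c :=
  GRing.isLinear.Build k V V *:%R (comb_act c) (comb_act_is_linear c).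

Lemma cact_comp l1 l2 x : cycle_at i l1 -> cact l2 (cact l1 x) = cact (l1 ++ l2) x.
Proof. by move=> /andP [_ /eqP e1]; rewrite act_path_comp /= e1 eqxx. Qed.

Lemma cact_perm l1 l2 x : cycle_at i l1 -> cycle_at i l2 -> perm_eq l1 l2 ->
  cact l1 x = cact l2 x.
Proof.
move=> /andP [v1 /eqP e1] /andP [v2 /eqP e2] l12.
by apply: act_path_perm; rewrite ?e1 ?e2.
Qed.

Lemma cact_comm l1 l2 x : cycle_at i l1 -> cycle_at i l2 ->
  cact l1 (cact l2 x) = cact l2 (cact l1 x).
Proof.
move=> c1 c2; rewrite !cact_comp //.
by apply: cact_perm; [apply: cycle_at_cat | apply: cycle_at_cat | rewrite perm_catC].
Qed.

Lemma cact_end l x : cycle_at i l -> rv i (cact l x) = cact l x.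
Proof. by move=> /andP [_ /eqP e]; rewrite -{1}e act_path_end. Qed.

Lemma rv_act_path s l x : rv i x = x ->
  rv i (act_path rv ra (s, l) x) = if (s == i) && cycle_at i l then cact l x else 0.
Proof.
move=> ix; have [-> /=|si] := eqVneq s i; last first.
  by rewrite /= act_pathE -ix rv_orth // !linear0.
rewrite /cycle_at; have [vl|nvl] /= := boolP (valid_path i l); last first.
  by rewrite act_path_invalid // linear0.
have [e|ei] := eqVneq (path_end i l) i; first by rewrite -{1}e act_path_end.
by rewrite -act_path_end rv_orth // eq_sym.
Qed.

Lemma comb_act_rv c x : comb_act c (rv i x) = comb_act c x.
Proof. by apply: eq_bigr => q _; rewrite !act_pathE rv_idem. Qed.

Lemma comb_act_end c x : comb_at c -> rv i (comb_act c x) = comb_act c x.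
Proof.
move=> /allP ci; rewrite /comb_act linear_sum; apply: eq_big_seq => q /ci qi.
by rewrite linearZ /= cact_end.
Qed.

Lemma cact_comb_act l c x : cycle_at i l -> comb_at c ->
  cact l (comb_act c x) = comb_act c (cact l x).
Proof.
move=> li /allP ci; rewrite /comb_act linear_sum; apply: eq_big_seq => q /ci qi.
by rewrite linearZ /= cact_comm.
Qed.

Lemma comb_act_comm c1 c2 x : comb_at c1 -> comb_at c2 ->
  comb_act c1 (comb_act c2 x) = comb_act c2 (comb_act c1 x).
Proof.
move=> /allP c1i c2i; rewrite [comb_act c1 (comb_act c2 x)]/comb_act.
transitivity (\sum_(q <- c1) q.1 *: comb_act c2 (cact q.2 x)).
  by apply: eq_big_seq => q /c1i qi; rewrite cact_comb_act.
rewrite [comb_act c1 x]/comb_act linear_sum; apply: eq_bigr => q _.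
by rewrite linearZ.
Qed.

Definition comb_mul c1 c2 := [seq (q1.1 * q2.1, q2.2 ++ q1.2) | q1 <- c1, q2 <- c2].

Lemma comb_at_mul c1 c2 : comb_at c1 -> comb_at c2 -> comb_at (comb_mul c1 c2).
Proof.
move=> /allP c1i /allP c2i; apply/allP => _ /allpairsP [[q1 q2] [/c1i q1i /c2i q2i ->]].
exact: cycle_at_cat.
Qed.

Lemma comb_act_mul c1 c2 x : comb_at c2 ->
  comb_act c1 (comb_act c2 x) = comb_act (comb_mul c1 c2) x.
Proof.
move=> /allP c2i; rewrite /comb_mul /comb_act big_allpairs_dep; apply: eq_bigr => q1 _.
rewrite linear_sum scaler_sumr; apply: eq_big_seq => q2 /c2i q2i /=.
by rewrite linearZ /= scalerA cact_comp.
Qed.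

Definition comb_sub c1 c2 := c1 ++ [seq (- q.1, q.2) | q <- c2].

Lemma comb_at_sub c1 c2 : comb_at c1 -> comb_at c2 -> comb_at (comb_sub c1 c2).
Proof. by rewrite /comb_at all_cat all_map => -> ->. Qed.

Lemma comb_act_sub c1 c2 x : comb_act (comb_sub c1 c2) x = comb_act c1 x - comb_act c2 x.
Proof.
rewrite /comb_act big_cat big_map -sumrN /=; congr (_ + _).
by apply: eq_bigr => q _; rewrite scaleNr.
Qed.

Lemma comb_at_path (r : k) l : cycle_at i l -> comb_at [:: (r, l)].
Proof. by rewrite /comb_at /= andbT. Qed.

Lemma comb_act_path (r : k) l x : comb_act [:: (r, l)] x = r *: cact l x.
Proof. by rewrite /comb_act big_seq1. Qed.

Lemma corner_cyclic v0 u : rv i v0 = v0 -> v0 != 0 -> rv i u = u ->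
  exists c, comb_at c /\ u = comb_act c v0.
Proof.
move=> iv0 v00 iu; have [e ue] := simple_cyclic v00 u.
rewrite -iu ue /act_elt linear_sum {u iu ue}.
elim: e => [|[a [s l]] e [c [ci IH]]]; first by exists [::]; rewrite /comb_act !big_nil.
rewrite big_cons linearZ /= rv_act_path //.
case: ifP => [/andP [_ li]|_]; last by exists c; rewrite scaler0 add0r.
by exists ((a, l) :: c); rewrite /comb_at /= li /comb_act big_cons IH.
Qed.

Lemma comb_act_annihilator c x0 : comb_at c -> rv i x0 = x0 -> x0 != 0 ->
  comb_act c x0 = 0 -> forall u, rv i u = u -> comb_act c u = 0.
Proof.
move=> ci ix0 x00 cx0 u iu.
pose W : {pred V} := fun x => `[< forall p, comb_act c (act_path rv ra p x) = 0 >].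
suff /asboolP /(_ (i, [::])) : u \in W by rewrite act_pathE iu.
apply: (simple_submodule_full (x0 := x0)) => //.
- by apply/asboolP => p; rewrite !linear0.
- move=> a y z /asboolP Wy /asboolP Wz; apply/asboolP => p.
  by rewrite linearP linearP /= Wy Wz scaler0 addr0.
- move=> p y /asboolP Wy; apply/asboolP => q; rewrite act_path_comp.
  by case: ifP; rewrite ?Wy ?linear0.
- apply/asboolP => -[s l]; rewrite -comb_act_rv rv_act_path //.
  case: ifP => [/andP [_ li]|_]; last by rewrite linear0.
  by rewrite -cact_comb_act // cx0 linear0.
Qed.

Lemma comb_act_eq c1 c2 w : comb_at c1 -> comb_at c2 -> rv i w = w -> w != 0 ->
  comb_act c1 w = comb_act c2 w -> forall u, rv i u = u -> comb_act c1 u = comb_act c2 u.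
Proof.
move=> c1i c2i iw w0 c12w u iu; apply/eqP; rewrite -subr_eq0 -comb_act_sub; apply/eqP.
apply: comb_act_annihilator iw w0 _ u iu; first exact: comb_at_sub.
by rewrite comb_act_sub c12w subrr.
Qed.

(** * The field structure on e_i V *)

Section CornerField.
Variable w : V.
Hypotheses (iw : rv i w = w) (w0 : w != 0).

Definition corner_pred : {pred V} := fun x => rv i x == x.

Lemma corner_zmod_closed : zmod_closed corner_pred.
Proof.
split=> [|x y /eqP ix /eqP iy]; apply/eqP; first by rewrite linear0.
by rewrite linearB /= ix iy.
Qed.

HB.instance Definition _ := GRing.isZmodClosed.Build V corner_pred corner_zmod_closed.

Definition corner := {x : V | x \in corner_pred}.
HB.instance Definition _ := [isSub of corner for @sval V (fun x => x \in corner_pred)].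
HB.instance Definition _ := [Choice of corner by <:].
HB.instance Definition _ := [SubChoice_isSubZmodule of corner by <:].

Lemma corner_rv (u : corner) : rv i (val u) = val u.
Proof. exact/eqP/(valP u). Qed.

Lemma rv_in_corner x : rv i x \in corner_pred.
Proof. exact/eqP/rv_idem. Qed.

Definition corner_proj x : corner := Sub (rv i x) (rv_in_corner x).

Lemma corner_projE x : val (corner_proj x) = rv i x.
Proof. by []. Qed.

Lemma corner_proj_val (u : corner) : corner_proj (val u) = u.
Proof. by apply: val_inj; rewrite corner_projE corner_rv. Qed.

Lemma corner_rep_ex (u : corner) : exists c, comb_at c && (comb_act c w == val u).
Proof.
have [c [ci ->]] := corner_cyclic iw w0 (corner_rv u).
by exists c; rewrite ci eqxx.
Qed.

Definition corner_rep (u : corner) := xchoose (corner_rep_ex u).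

Lemma corner_rep_at u : comb_at (corner_rep u).
Proof. by case/andP: (xchooseP (corner_rep_ex u)). Qed.

Lemma corner_rep_act u : comb_act (corner_rep u) w = val u.
Proof. by case/andP: (xchooseP (corner_rep_ex u)) => _ /eqP. Qed.

Lemma corner_rep_eq u c : comb_at c -> comb_act c w = val u ->
  forall x, rv i x = x -> comb_act (corner_rep u) x = comb_act c x.
Proof.
by move=> ci cw; apply: (comb_act_eq (corner_rep_at u) ci iw w0); rewrite corner_rep_act.
Qed.

Definition corner_mul (u v : corner) := corner_proj (comb_act (corner_rep u) (val v)).
Definition corner_one : corner := corner_proj w.

Lemma corner_mulE u v : val (corner_mul u v) = comb_act (corner_rep u) (val v).
Proof. by rewrite corner_projE comb_act_end ?corner_rep_at. Qed.

Lemma corner_mulC : commutative corner_mul.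
Proof.
move=> u v; apply: val_inj; rewrite !corner_mulE -{1}corner_rep_act -(corner_rep_act u).
by rewrite comb_act_comm ?corner_rep_at.
Qed.

Lemma corner_mulA : associative corner_mul.
Proof.
move=> u v z; apply: val_inj; rewrite !corner_mulE.
rewrite (@corner_rep_eq (corner_mul u v) (comb_mul (corner_rep u) (corner_rep v))).
- by rewrite comb_act_mul ?corner_rep_at.
- by rewrite comb_at_mul ?corner_rep_at.
- by rewrite -comb_act_mul ?corner_rep_at // corner_rep_act corner_mulE.
- exact: corner_rv.
Qed.

Lemma corner_mul1 : left_id corner_one corner_mul.
Proof.
move=> u; apply: val_inj; rewrite corner_mulE (@corner_rep_eq _ [:: (1, [::])]).
- by rewrite comb_act_path scale1r act_pathE corner_rv.
- exact/comb_at_path/cycle_at_nil.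
- by rewrite comb_act_path scale1r act_pathE iw.
- exact: corner_rv.
Qed.

Lemma corner_mulDl : left_distributive corner_mul +%R.
Proof.
move=> u v z; apply: val_inj.
by rewrite !(corner_mulC _ z) Algebra.valD !corner_mulE Algebra.valD linearD.
Qed.

Lemma corner_one_neq0 : corner_one != 0.
Proof. by apply: contra_neq w0 => /(congr1 val); rewrite corner_projE iw. Qed.

HB.instance Definition _ := GRing.Zmodule_isComNzRing.Build corner
  corner_mulA corner_mulC corner_mul1 corner_mulDl corner_one_neq0.

Lemma corner_mulrE (u v : corner) : val (u * v) = comb_act (corner_rep u) (val v).
Proof. exact: corner_mulE. Qed.

Lemma corner_oneE : val (1 : corner) = w.
Proof. exact: iw. Qed.

Lemma corner_inv_ex (u : corner) : u != 0 -> exists v, v * u == 1.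
Proof.
move=> u0; have u0' : val u != 0 by apply: contra_neq u0 => u_0; apply: val_inj.
have [c [ci wE]] := corner_cyclic (corner_rv u) u0' iw.
exists (corner_proj (comb_act c w)); apply/eqP/val_inj.
rewrite corner_mulrE corner_oneE (@corner_rep_eq _ c) ?corner_rv //.
by rewrite corner_projE comb_act_end.
Qed.

Definition corner_inv (u : corner) : corner :=
  if pselect (exists v, v * u == 1) is left uinv then xchoose uinv else 0.

Lemma corner_mulVf u : u != 0 -> corner_inv u * u = 1.
Proof.
move=> u0; rewrite /corner_inv; case: pselect => [uinv|]; first exact/eqP/(xchooseP uinv).
by move/(_ (corner_inv_ex u0)).
Qed.

Lemma corner_inv0 : corner_inv 0 = 0.
Proof.
rewrite /corner_inv; case: pselect => // uinv; exfalso.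
by case: uinv => v; rewrite mulr0 eq_sym oner_eq0.
Qed.

HB.instance Definition _ := GRing.ComNzRing_isField.Build corner corner_mulVf corner_inv0.

Definition corner_scalar (r : k) : corner := corner_proj (r *: w).

Lemma corner_scalarE r : val (corner_scalar r) = r *: w.
Proof. by rewrite corner_projE linearZ /= iw. Qed.

Lemma corner_scalar_mul r u : val (corner_scalar r * u) = r *: val u.
Proof.
rewrite corner_mulrE (@corner_rep_eq _ [:: (r, [::])]).
- by rewrite comb_act_path act_pathE corner_rv.
- exact/comb_at_path/cycle_at_nil.
- by rewrite comb_act_path act_pathE iw corner_scalarE.
- exact: corner_rv.
Qed.

Lemma corner_scalar_is_zmod_morphism : zmod_morphism corner_scalar.
Proof. by move=> a b; apply: val_inj; rewrite Algebra.valB !corner_scalarE scalerBl. Qed.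

Lemma corner_scalar_is_monoid_morphism : monoid_morphism corner_scalar.
Proof.
split=> [|a b]; apply: val_inj; first by rewrite corner_scalarE scale1r corner_oneE.
by rewrite corner_scalar_mul !corner_scalarE scalerA mulrC.
Qed.

HB.instance Definition _ :=
  GRing.isZmodMorphism.Build k corner corner_scalar corner_scalar_is_zmod_morphism.
HB.instance Definition _ :=
  GRing.isMonoidMorphism.Build k corner corner_scalar corner_scalar_is_monoid_morphism.

Definition cycle_elt l : corner := corner_proj (cact l w).

Lemma cycle_eltE l : cycle_at i l -> val (cycle_elt l) = cact l w.
Proof. by move=> li; rewrite corner_projE cact_end. Qed.

Lemma cycle_elt_perm l1 l2 : cycle_at i l1 -> cycle_at i l2 -> perm_eq l1 l2 ->
  cycle_elt l1 = cycle_elt l2.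
Proof.
by move=> l1i l2i l12; apply: val_inj; rewrite !cycle_eltE // (cact_perm _ l1i l2i l12).
Qed.

Lemma cycle_elt_mul l1 l2 : cycle_at i l1 -> cycle_at i l2 ->
  cycle_elt l1 * cycle_elt l2 = cycle_elt (l1 ++ l2).
Proof.
move=> l1i l2i; apply: val_inj; rewrite corner_mulrE (@corner_rep_eq _ [:: (1, l1)]).
- rewrite comb_act_path scale1r !cycle_eltE ?cycle_at_cat // cact_comp //.
  by apply: cact_perm; [apply: cycle_at_cat | apply: cycle_at_cat | rewrite perm_catC].
- exact: comb_at_path.
- by rewrite comb_act_path scale1r cycle_eltE.
- exact: corner_rv.
Qed.

Lemma corner_projD x y : corner_proj (x + y) = corner_proj x + corner_proj y.
Proof. by apply: val_inj; rewrite Algebra.valD !corner_projE linearD. Qed.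

Lemma corner_scalar_cycle r l : cycle_at i l ->
  corner_scalar r * cycle_elt l = corner_proj (r *: cact l w).
Proof.
move=> li; apply: val_inj.
by rewrite corner_scalar_mul cycle_eltE // corner_projE linearZ /= cact_end.
Qed.

Lemma corner_comb (u : corner) :
  u = \sum_(q <- corner_rep u) corner_scalar q.1 * cycle_elt q.2.
Proof.
rewrite -[LHS]corner_proj_val -corner_rep_act; have := corner_rep_at u.
elim: (corner_rep u) => [_|q c IH /andP [qi ci]].
  by rewrite big_nil; apply: val_inj; rewrite corner_projE /comb_act big_nil linear0.
by rewrite big_cons -IH // corner_scalar_cycle // -corner_projD /comb_act big_cons.
Qed.

(* Inserting the loop b into a nonzero cycle multiplies it by a factor that,
   by commutativity, does not depend on the insertion point. *)
Definition loop_ctx b (ag : seq (Q1 Q) * seq (Q1 Q)) := [&& cycle_at i (ag.1 ++ b ++ ag.2),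
  cycle_at i (ag.1 ++ ag.2) & cycle_elt (ag.1 ++ ag.2) != 0].

Definition loop_ratio b : corner :=
  if pselect (exists ag, loop_ctx b ag) is left ctx then
    let ag := xchoose ctx in cycle_elt (ag.1 ++ b ++ ag.2) / cycle_elt (ag.1 ++ ag.2)
  else 0.

Lemma loop_ratioP (a b g : seq (Q1 Q)) : loop_ctx b (a, g) ->
  cycle_elt (a ++ b ++ g) = loop_ratio b * cycle_elt (a ++ g).
Proof.
move=> ctx; rewrite /loop_ratio; case: pselect => [ctx'|]; last first.
  by move/(_ (ex_intro _ (a, g) ctx)).
case/and3P: ctx => abg ag _.
case: (xchoose ctx') (xchooseP ctx') => a0 g0 /and3P [abg0 ag0 n0].
have : cycle_elt (a0 ++ b ++ g0) * cycle_elt (a ++ g) =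
       cycle_elt (a0 ++ g0) * cycle_elt (a ++ b ++ g).
  rewrite !cycle_elt_mul //; apply: cycle_elt_perm; try exact: cycle_at_cat.
  by apply/permP => x; rewrite !count_cat; lia.
by rewrite /= mulrAC => ->; rewrite mulrC mulrA mulVf // mul1r.
Qed.

Lemma cycle_elt_excise (a b g : seq (Q1 Q)) : cycle_at i (a ++ b ++ g) ->
  path_end i (a ++ b) = path_end i a -> cycle_elt (a ++ b ++ g) != 0 ->
  cycle_elt (a ++ b ++ g) = loop_ratio b * cycle_elt (a ++ g).
Proof.
move=> abg eb abg0; have [ag abbg] := cycle_at_excise abg eb.
have sq : cycle_elt (a ++ b ++ g) * cycle_elt (a ++ b ++ g) =
          cycle_elt (a ++ g) * cycle_elt (a ++ b ++ b ++ g).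
  rewrite !cycle_elt_mul //; apply: cycle_elt_perm; try exact: cycle_at_cat.
  by apply/permP => x; rewrite !count_cat; lia.
apply: loop_ratioP; rewrite /loop_ctx /= abg ag /=; apply: contra_neq abg0 => ag0.
by apply/eqP; move: sq; rewrite ag0 mul0r => /eqP; rewrite mulf_eq0 orbb.
Qed.

Definition corner_gens := [seq cycle_elt l | l <- words (Q1 Q) #|Q0 Q|] ++
  [seq loop_ratio b | b <- words (Q1 Q) #|Q0 Q|].

Local Notation scalars := (image_subfield corner_scalar).

Lemma ring_gen_cycle_elt l : cycle_at i l -> ring_gen scalars corner_gens (cycle_elt l).
Proof.
have [n] := ubnP (size l); elim: n l => // n IH l /ltnSE l_size li.
have [->|l0] := eqVneq (cycle_elt l) 0; first exact/GenBase/rpred0.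
have [short|long] := leqP (size l) #|Q0 Q|.
  by apply: GenElt; rewrite mem_cat map_f ?words_mem.
have [a [b [g [l_eq b_gt0 b_size eb]]]] := pigeonhole_take (path_end i) long.
subst l; rewrite (cycle_elt_excise li eb l0); apply: GenMul.
  by apply: GenElt; rewrite mem_cat map_f ?orbT ?words_mem.
apply: IH; last by case: (cycle_at_excise li eb).
by move: l_size b_gt0; rewrite !size_cat; lia.
Qed.

Lemma ring_gen_corner (u : corner) : ring_gen scalars corner_gens u.
Proof.
rewrite (corner_comb u); have := corner_rep_at u.
elim: (corner_rep u) => [_|q c IH /andP [qi ci]].
  by rewrite big_nil; apply/GenBase/rpred0.
rewrite big_cons; apply: GenAdd (IH ci); apply: GenMul (ring_gen_cycle_elt qi).
by apply: GenBase; apply/asboolP; exists q.1.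
Qed.

End CornerField.

End CycleAlgebra.

End Module.

Lemma corner_dim_le1 (Q : quiver2) (k : closedFieldType) (V : lmodType k)
    (rv : Q0 Q -> {linear V -> V}) (ra : Q1 Q -> {linear V -> V}) :
  is_kQ_module rv ra -> ker_eta_annihilates rv ra -> is_simple_module rv ra ->
  forall i w, rv i w = w -> w != 0 -> forall v, exists r, rv i v = r *: w.
Proof.
move=> Vmod Vker Vsimple i w iw w0 v.
have [r /(congr1 val)] := zariski_closed (ring_gen_corner Vmod Vker Vsimple iw w0)
  (corner_proj Vmod i v).
by rewrite (corner_projE Vmod) (corner_scalarE Vmod iw); exists r.
Qed.

Unset Implicit Arguments.

Theorem lemma3p3 (Q : quiver2) (k : closedFieldType) (V : lmodType k)
  (rv : Q0 Q -> {linear V -> V}) (ra : Q1 Q -> {linear V -> V}) :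
  is_dimer_quiver Q ->
  is_kQ_module rv ra ->
  ker_eta_annihilates rv ra ->
  is_simple_module rv ra ->
  forall i : Q0 Q, dim_eV_le1 rv i.
Proof.
move=> _ Vmod Vker Vsimple i.
have [[w iw w0]|eV0] := pselect (exists2 w, rv i w = w & w != 0).
  by exists w; apply: corner_dim_le1 Vmod Vker Vsimple i w iw w0.
exists 0 => v; exists 0; rewrite scale0r; apply/eqP/negPn/negP => iv0.
by apply: eV0; exists (rv i v); rewrite ?(rv_idem Vmod).
Qed.
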